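(* There exist constants $m_0\in\mathbb N$ and $C>0$ such that for all $n$, all $m>m_0$ and all $p\in(0,1)$ with $mp^3\le1$, $$\|\bar g_1\ast_1^0\bar g_1\|_2^2\le C\big(mp^5e^{-4mp^2}+(mp^3)^2e^{-4mp^2}\big),$$ $$\|\bar g_2\ast_1^1\bar g_2\|_2^2\le C\big(mp^4e^{-4mp^2}+(mp^3)^2e^{-4mp^2}\big),$$ $$\|\bar g_2\ast_1^1\bar g_1\|_2^2\le C\big(mp^5e^{-4mp^2}+(mp^3)^2e^{-4mp^2}\big).$$
   Context: $\mu_{m,p}$ is the measure on $\{0,1\}^m$ with $\mu_{m,p}(x)=p^{|x|}(1-p)^{m-|x|}$, $|x|=\sum_ix_i$; norms are $L^2$ norms with respect to products of $\mu_{m,p}$. $g:\{0,1\}^m\times\{0,1\}^m\to\{0,1\}$, $g(x,y)=1$ if $x_i=y_i=1$ for some $i$ and $0$ otherwise; $g_1(x)=\int g(x,y)\,d\mu_{m,p}(y)$; $\hat p=1-(1-p^2)^m$; $\bar g_2=g-\hat p$, $\bar g_1=g_1-\hat p$. Contraction: for $f$ on $(\{0,1\}^m)^k$, $h$ on $(\{0,1\}^m)^l$, $0\le a\le b\le k\wedge l$: $f\ast_b^ah(x_1,\ldots,x_{b-a},y_1,\ldots,y_{k-b},z_1,\ldots,z_{l-b})=\int_{(\{0,1\}^m)^a}f(w,x,y)h(w,x,z)\,d\mu_{m,p}^{\otimes a}(w)$. *)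

From mathcomp Require Import all_boot all_order all_algebra.
From mathcomp Require Import reals sequences exp.
Set Implicit Arguments. Unset Strict Implicit. Unset Printing Implicit Defensive.
Import Order.TTheory GRing.Theory Num.Theory.
Local Open Scope ring_scope.

Section Defs.
Variables (R : realType) (m : nat) (p : R).

Definition pt := {ffun 'I_m -> bool}.
Definition pt0 : pt := [ffun => false].

Definition wt (x : pt) : nat := (\sum_i (x i : nat))%N.

Definition mu (x : pt) : R := p ^+ wt x * (1 - p) ^+ (m - wt x).

Definition mu_seq (s : seq pt) : R := \prod_(w <- s) mu w.

(* integral of a function of j variables in ({0,1}^m)^j against mu^{(x) j};
   functions of several variables are represented as functions on sequences
   of points (only the first j entries matter) *)
Definition intj (j : nat) (F : seq pt -> R) : R :=
  \sum_(s : j.-tuple pt) mu_seq s * F s.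

Definition norm2sq (j : nat) (F : seq pt -> R) : R := intj j (fun s => F s ^+ 2).

(* number of variables of the contraction f *_b^a h, f of k, h of l variables *)
Definition contr_dim (k l a b : nat) : nat := (b - a + (k - b) + (l - b))%N.

(* contraction: (f *_b^a h)(x_1..x_{b-a}, y_1..y_{k-b}, z_1..z_{l-b})
     = int f(w,x,y) h(w,x,z) dmu^{(x) a}(w) *)
Definition contr (k l a b : nat) (f h : seq pt -> R) : seq pt -> R :=
  fun s =>
    let x := take (b - a) s in
    let y := take (k - b) (drop (b - a) s) in
    let z := drop (b - a + (k - b)) s in
    intj a (fun w => f (w ++ x ++ y) * h (w ++ x ++ z)).

Definition g (x y : pt) : R := if [exists i, x i && y i] then 1 else 0.

Definition g1 (x : pt) : R := \sum_(y : pt) mu y * g x y.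

Definition phat : R := 1 - (1 - p ^+ 2) ^+ m.

Definition gbar2 (s : seq pt) : R := g (nth pt0 s 0) (nth pt0 s 1) - phat.
Definition gbar1 (s : seq pt) : R := g1 (nth pt0 s 0) - phat.

End Defs.

Arguments mu {R} m p x.
Arguments mu_seq {R} m p s.
Arguments intj {R} m p j F.
Arguments norm2sq {R} m p j F.
Arguments contr {R} m p k l a b f h _.
Arguments g1 {R} m p x.
Arguments phat {R} m p.
Arguments gbar2 {R} m p s.
Arguments gbar1 {R} m p s.

From mathcomp Require Import all_boot all_order all_algebra.
From mathcomp Require Import reals sequences exp.
From mathcomp Require Import ring lra.
Set Implicit Arguments. Unset Strict Implicit. Unset Printing Implicit Defensive.
Import Order.TTheory GRing.Theory Num.Theory.
Local Open Scope ring_scope.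

(* Both g and g_1 factorise over the m coordinates: 1 - g(x,y) and 1 - g_1(x)
   are products of one-coordinate factors, and phat = 1 - (1-p^2)^m.  Hence each
   of the three squared norms is a signed sum of 16 terms c_w q_w^m whose
   coefficients sum to 0 and whose bases satisfy q_w = P + O(p^3), where
   P = (1-p^2)^4.  Expanding q_w^m around P to second order, the zeroth order
   cancels, the first order is m (sum c_w q_w) / P = O(m p^k), the second order is
   O(m^2 p^6) = O((m p^3)^2), and the cubic remainder is
   O((m p^3)^3 e^(O(m p^3))) = O((m p^3)^2) because m p^3 <= 1.  Finally
   P^m <= e^(-4 m p^2), and m p^3 <= 1 with m > 8 forces p <= 1/2. *)

Section ProductMeasure.
Variables (R : realType) (m : nat) (p : R).

Definition bern_mean (f : bool -> R) : R := (1 - p) * f false + p * f true.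

Lemma mu_prod (x : pt m) : mu m p x = \prod_i (if x i then p else 1 - p).
Proof.
rewrite (bigID (fun i => x i)) /=.
under eq_bigr => i -> do over.
under [X in _ * X]eq_bigr => i /negbTE -> do over.
have wtE : wt x = #|[pred i | x i]|.
  by rewrite /wt -sum1_card [RHS]big_mkcond; apply: eq_bigr => i _; rewrite inE; case: (x i).
have wtCE : (m - wt x)%N = #|[pred i | ~~ x i]|.
  by rewrite wtE -{1}(card_ord m) -(cardC [pred i | x i]) addKn.
by rewrite !prodr_const /mu wtCE wtE.
Qed.

Lemma sum_mu_prod (F : 'I_m -> bool -> R) :
  \sum_(x : pt m) mu m p x * \prod_i F i (x i) = \prod_i bern_mean (F i).
Proof.
transitivity (\prod_i \sum_(b : bool) (if b then p else 1 - p) * F i b); last first.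
  by apply: eq_bigr => i _; rewrite big_bool /= addrC.
rewrite bigA_distr_bigA; apply: eq_bigr => x _.
by rewrite mu_prod -big_split.
Qed.

Lemma intj0 F : intj m p 0 F = F [::].
Proof.
rewrite /intj (eq_bigr (fun=> F [::])) => [|s _].
  by rewrite sumr_const card_tuple expn0.
by rewrite tuple0 /mu_seq big_nil mul1r.
Qed.

Lemma intj1 F : intj m p 1 F = \sum_(x : pt m) mu m p x * F [:: x].
Proof.
rewrite /intj (reindex (fun x : pt m => [tuple x])) /=; last first.
  exists (fun t : 1.-tuple (pt m) => thead t) => // t _.
  by apply: val_inj => /=; case: t => [[|a [|b s]]] //=.
by apply: eq_bigr => x _; rewrite /mu_seq big_cons big_nil mulr1.
Qed.

Lemma intj2 F : intj m p 2 F =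
  \sum_(x : pt m) \sum_(y : pt m) mu m p x * mu m p y * F [:: x; y].
Proof.
rewrite pair_big /intj (reindex (fun xy : pt m * pt m => [tuple xy.1; xy.2])) /=; last first.
  exists (fun t : 2.-tuple (pt m) => (thead t, thead (behead_tuple t))); first by case.
  by move=> t _; apply: val_inj => /=; case: t => [[|a [|b [|c s]]]] //=.
by apply: eq_bigr => -[x y] _; rewrite /mu_seq !big_cons big_nil mulr1 mulrA.
Qed.

(* Signed sums of coordinatewise products: every integrand below stays in this class,
   which is closed under products and under integrating out one point. *)
Definition prodsum (A : Type) (L : seq (R * (A -> R))) (a : 'I_m -> A) : R :=
  \sum_(u <- L) u.1 * \prod_i u.2 (a i).

Definition prodsum_mul (A : Type) (L L' : seq (R * (A -> R))) : seq (R * (A -> R)) :=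
  [seq (u.1 * v.1, fun t => u.2 t * v.2 t) | u <- L, v <- L'].

Definition prodsum_int (A : Type) (L : seq (R * (bool * A -> R))) : seq (R * (A -> R)) :=
  [seq (u.1, fun t => bern_mean (fun b => u.2 (b, t))) | u <- L].

Definition prodsum_weights (L : seq (R * (unit -> R))) : seq (R * R) :=
  [seq (u.1, u.2 tt) | u <- L].

Lemma prodsumM (A : Type) (L L' : seq (R * (A -> R))) a :
  prodsum L a * prodsum L' a = prodsum (prodsum_mul L L') a.
Proof.
rewrite /prodsum big_allpairs_dep big_distrlr /=; apply: eq_bigr => u _.
by apply: eq_bigr => v _; rewrite big_split /=; ring.
Qed.

Lemma sum_mu_prodsum (A : Type) (L : seq (R * (bool * A -> R))) (a : 'I_m -> A) :
  \sum_(x : pt m) mu m p x * prodsum L (fun i => (x i, a i)) = prodsum (prodsum_int L) a.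
Proof.
rewrite /prodsum big_map (eq_bigr _ (fun x _ => mulr_sumr _ _ _ (mu m p x))).
rewrite exchange_big; apply: eq_bigr => u _ /=.
rewrite -(sum_mu_prod (fun i b => u.2 (b, a i))) mulr_sumr.
by apply: eq_bigr => x _; rewrite mulrCA.
Qed.

Lemma prodsum_unit (L : seq (R * (unit -> R))) :
  prodsum L (fun _ => tt) = \sum_(w <- prodsum_weights L) w.1 * w.2 ^+ m.
Proof. by rewrite big_map; apply: eq_bigr => u _; rewrite prodr_const card_ord. Qed.

End ProductMeasure.

Section Kernel.
Variables (R : realType) (m : nat) (p : R).

Definition g_factor (b c : bool) : R := if b && c then 0 else 1.
Definition g1_factor (b : bool) : R := if b then 1 - p else 1.

Definition gbar_prodsum (A : Type) (h : A -> R) : seq (R * (A -> R)) :=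
  [:: (1, fun _ => 1 - p ^+ 2); (-1, h)].

Lemma prodsum_gbar (A : Type) (h : A -> R) (a : 'I_m -> A) :
  prodsum (gbar_prodsum h) a = (1 - p ^+ 2) ^+ m - \prod_i h (a i).
Proof. by rewrite /prodsum !big_cons big_nil /= prodr_const card_ord; ring. Qed.

Lemma g_prod (x y : pt m) : g R x y = 1 - \prod_i g_factor (x i) (y i).
Proof.
rewrite /g; case: existsP => [[i xyi]|xy0].
  by rewrite (bigD1 i) //= /g_factor xyi mul0r subr0.
rewrite big1 ?subrr // => i _; rewrite /g_factor.
by case: (x i && y i) / idP => // xyi; case: xy0; exists i.
Qed.

Lemma g1_prod (x : pt m) : g1 m p x = 1 - \prod_i g1_factor (x i).
Proof.
have sum_mu1 : \sum_(y : pt m) mu m p y = 1.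
  have := sum_mu_prod p (fun (_ : 'I_m) (_ : bool) => 1 : R).
  rewrite /bern_mean /= !mulr1 subrK prodr_const expr1n => <-.
  by apply: eq_bigr => y _; rewrite mulr1.
rewrite /g1 (eq_bigr (fun y => mu m p y - mu m p y * \prod_i g_factor (x i) (y i))); last first.
  by move=> y _; rewrite g_prod mulrBr mulr1.
rewrite sumrB sum_mu1 (sum_mu_prod p (fun i b => g_factor (x i) b)).
congr (_ - _); apply: eq_bigr => i _.
by rewrite /bern_mean /g_factor /g1_factor andbF andbT; case: (x i); ring.
Qed.

Lemma gbar1E (x : pt m) : gbar1 m p [:: x] = (1 - p ^+ 2) ^+ m - \prod_i g1_factor (x i).
Proof. by rewrite /gbar1 /phat /= g1_prod; ring. Qed.

Lemma gbar2E (x y : pt m) :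
  gbar2 m p [:: x; y] = (1 - p ^+ 2) ^+ m - \prod_i g_factor (x i) (y i).
Proof. by rewrite /gbar2 /phat /= g_prod; ring. Qed.

End Kernel.

Arguments g_factor {R} b c.

Section Expansions.
Variables (R : realType) (p : R).

(* Coordinate i of (x, y, z) is encoded as (x i, (y i, (z i, tt))); integration
   always removes the first component. *)

Definition expansion_g1g1 : seq (R * R) :=
  let G := gbar_prodsum p (fun t : bool * unit => g1_factor p t.1) in
  prodsum_weights (prodsum_int p (prodsum_mul (prodsum_mul G G) (prodsum_mul G G))).

Definition expansion_g2g2 : seq (R * R) :=
  let K := prodsum_int p
    (prodsum_mul (gbar_prodsum p (fun t : bool * (bool * (bool * unit)) => g_factor t.1 t.2.1))
                 (gbar_prodsum p (fun t => g_factor t.1 t.2.2.1))) in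
  prodsum_weights (prodsum_int p (prodsum_int p (prodsum_mul K K))).

Definition expansion_g2g1 : seq (R * R) :=
  let K := prodsum_int p
    (prodsum_mul (gbar_prodsum p (fun t : bool * (bool * unit) => g_factor t.1 t.2.1))
                 (gbar_prodsum p (fun t => g1_factor p t.1))) in
  prodsum_weights (prodsum_int p (prodsum_mul K K)).

Variable m : nat.

Lemma norm_contr_g1g1E :
  norm2sq m p (contr_dim 1 1 0 1) (contr m p 1 1 0 1 (gbar1 m p) (gbar1 m p))
  = \sum_(w <- expansion_g1g1) w.1 * w.2 ^+ m.
Proof.
rewrite /expansion_g1g1 -prodsum_unit /norm2sq intj1 -sum_mu_prodsum; apply: eq_bigr => x _.
by rewrite /contr /= intj0 -!prodsumM prodsum_gbar gbar1E.
Qed.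

Lemma norm_contr_g2g1E :
  norm2sq m p (contr_dim 2 1 1 1) (contr m p 2 1 1 1 (gbar2 m p) (gbar1 m p))
  = \sum_(w <- expansion_g2g1) w.1 * w.2 ^+ m.
Proof.
rewrite /expansion_g2g1 -prodsum_unit /norm2sq intj1 -sum_mu_prodsum; apply: eq_bigr => y _.
rewrite -prodsumM -expr2 /contr intj1 -sum_mu_prodsum; congr (_ * (_ ^+ 2)).
by apply: eq_bigr => x _; rewrite -prodsumM !prodsum_gbar gbar1E gbar2E.
Qed.

Lemma norm_contr_g2g2E :
  norm2sq m p (contr_dim 2 2 1 1) (contr m p 2 2 1 1 (gbar2 m p) (gbar2 m p))
  = \sum_(w <- expansion_g2g2) w.1 * w.2 ^+ m.
Proof.
rewrite /expansion_g2g2 -prodsum_unit /norm2sq intj2 -sum_mu_prodsum exchange_big.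
apply: eq_bigr => z _.
rewrite -sum_mu_prodsum mulr_sumr; apply: eq_bigr => y _.
rewrite [RHS]mulrCA mulrA -prodsumM -expr2 /contr intj1 -sum_mu_prodsum; congr (_ * (_ ^+ 2)).
by apply: eq_bigr => x _; rewrite -prodsumM !prodsum_gbar !gbar2E.
Qed.

End Expansions.

Section TaylorExpansion.
Variable R : realType.

Lemma bin_le_expn n k : ('C(n, k) <= n ^ k)%N.
Proof.
apply: (leq_trans (leq_pmulr _ (fact_gt0 k))).
rewrite bin_ffact ffact_prod -[k in (_ <= n ^ k)%N]card_ord -prod_nat_const.
by apply: leq_prod => i _; apply: leq_subr.
Qed.

Lemma binR_le_exp n k : ('C(n, k)%:R : R) <= n%:R ^+ k.
Proof. by rewrite -natrX ler_nat bin_le_expn. Qed.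

Lemma pow1D_le_expR (x : R) n : 0 <= x -> (1 + x) ^+ n <= expR (n%:R * x).
Proof.
move=> x0; rewrite expRM_natl lerXn2r ?nnegrE ?expR_ge1Dx ?expR_ge0 //.
by rewrite addr_ge0.
Qed.

Definition taylor_rem (n : nat) (a : R) : R :=
  (1 + a) ^+ n - 1 - n%:R * a - 'C(n, 2)%:R * a ^+ 2.

Lemma taylor_remS n a :
  taylor_rem n.+1 a = (1 + a) * taylor_rem n a + 'C(n, 2)%:R * a ^+ 3.
Proof. by rewrite /taylor_rem binS bin1 natrD exprS -natr1; ring. Qed.

Lemma taylor_rem_le n a :
  `|taylor_rem n a| <= 'C(n, 3)%:R * `|a| ^+ 3 * (1 + `|a|) ^+ n.
Proof.
elim: n => [|n IH]; first by rewrite /taylor_rem !mul0r !subr0 subrr normr0.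
have a1_ge1 : 1 <= 1 + `|a| by rewrite lerDl.
have a1_pow_ge1 : 1 <= (1 + `|a|) ^+ n by apply: exprn_ege1.
have rem_step : `|1 + a| * `|taylor_rem n a|
    <= (1 + `|a|) * ('C(n, 3)%:R * `|a| ^+ 3 * (1 + `|a|) ^+ n).
  by apply: ler_pM => //; rewrite (le_trans (ler_normD _ _)) ?normr1.
have cubic_step :
    ('C(n, 2)%:R : R) * `|a| ^+ 3 <= 'C(n, 2)%:R * `|a| ^+ 3 * (1 + `|a|) ^+ n.+1.
  by rewrite ler_peMr ?mulr_ge0 ?exprn_ege1.
rewrite taylor_remS binS natrD (le_trans (ler_normD _ _)) //.
rewrite normrM [`|_ * a ^+ 3|]normrM normr_nat normrX.
rewrite [(1 + `|a|) ^+ n.+1]exprS in cubic_step *; lra.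
Qed.

Lemma taylor_rem_le_expR n (a A : R) :
  `|a| <= A -> `|taylor_rem n a| <= (n%:R * A) ^+ 3 * expR (n%:R * A).
Proof.
move=> aA; have A0 : 0 <= A := le_trans (normr_ge0 a) aA.
apply: (le_trans (taylor_rem_le n a)); rewrite exprMn.
apply: ler_pM; rewrite ?mulr_ge0 ?exprn_ge0 ?addr_ge0 //.
  by apply: ler_pM; rewrite ?exprn_ge0 ?binR_le_exp // lerXn2r ?nnegrE.
apply: le_trans (pow1D_le_expR n A0).
by rewrite lerXn2r ?nnegrE ?addr_ge0 ?lerD2l.
Qed.

Lemma pow_expansion (c q P : R) n : P != 0 ->
  let d := (q - P) / P in
  c * q ^+ n
  = P ^+ n * (c + n%:R * (c * d) + 'C(n, 2)%:R * (c * d ^+ 2) + c * taylor_rem n d).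
Proof.
move=> P0 d; have -> : q = P * (1 + d) by rewrite /d mulrDr mulr1 mulrCA divff // mulr1; ring.
by rewrite exprMn /taylor_rem; ring.
Qed.

Lemma sum_mul_le_abs (L : seq (R * R)) (F : R * R -> R) (B : R) :
  (forall w, w \in L -> `|F w| <= B) ->
  \sum_(w <- L) w.1 * F w <= (\sum_(w <- L) `|w.1|) * B.
Proof.
move=> FB; rewrite mulr_suml !big_seq; apply: ler_sum => w wL.
by rewrite (le_trans (ler_norm _)) // normrM ler_wpM2l ?FB.
Qed.

Lemma zero_sum_pow_le (L : seq (R * R)) n (P A : R) :
  0 < P -> \sum_(w <- L) w.1 = 0 ->
  (forall w, w \in L -> `|w.2 - P| <= A * P) ->
  \sum_(w <- L) w.1 * w.2 ^+ n <=
  P ^+ n * (n%:R * (`|\sum_(w <- L) w.1 * w.2| / P)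
          + n%:R ^+ 2 * (`|\sum_(w <- L) w.1 * (w.2 - P) ^+ 2| / P ^+ 2)
          + (\sum_(w <- L) `|w.1|) * ((n%:R * A) ^+ 3 * expR (n%:R * A))).
Proof.
move=> P0 sum0 Lbound; have P_neq0 := lt0r_neq0 P0.
rewrite (eq_bigr _ (fun w _ => pow_expansion w.1 w.2 n P_neq0)) -mulr_sumr.
apply: ler_wpM2l; first by rewrite exprn_ge0 ?ltW.
rewrite !big_split /= sum0 add0r -!mulr_sumr.
have N1E : \sum_(w <- L) w.1 * ((w.2 - P) / P) = (\sum_(w <- L) w.1 * w.2) / P.
  transitivity ((\sum_(w <- L) w.1 * w.2 - P * \sum_(w <- L) w.1) / P).
    by rewrite mulr_sumr -sumrB mulr_suml; apply: eq_bigr => w _; field.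
  by rewrite sum0 mulr0 subr0.
have N2E : \sum_(w <- L) w.1 * ((w.2 - P) / P) ^+ 2
    = (\sum_(w <- L) w.1 * (w.2 - P) ^+ 2) / P ^+ 2.
  by rewrite mulr_suml; apply: eq_bigr => w _; rewrite expr_div_n mulrA.
rewrite N1E N2E.
set N1 := \sum_(w <- L) w.1 * w.2; set N2 := \sum_(w <- L) w.1 * (w.2 - P) ^+ 2.
have P1 : 0 <= P^-1 by rewrite invr_ge0 ltW.
have P2 : 0 <= (P ^+ 2)^-1 by rewrite invr_ge0 exprn_ge0 ?ltW.
have first_le : n%:R * (N1 / P) <= n%:R * (`|N1| / P).
  by apply: ler_wpM2l => //; apply: ler_wpM2r => //; apply: ler_norm.
have second_le : 'C(n, 2)%:R * (N2 / P ^+ 2) <= n%:R ^+ 2 * (`|N2| / P ^+ 2).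
  apply: (le_trans (y := 'C(n, 2)%:R * (`|N2| / P ^+ 2))).
    by apply: ler_wpM2l => //; apply: ler_wpM2r => //; apply: ler_norm.
  by apply: ler_wpM2r; rewrite ?binR_le_exp ?mulr_ge0.
have rem_le : \sum_(w <- L) w.1 * taylor_rem n ((w.2 - P) / P)
    <= (\sum_(w <- L) `|w.1|) * ((n%:R * A) ^+ 3 * expR (n%:R * A)).
  apply: sum_mul_le_abs => w /Lbound qP; apply: taylor_rem_le_expR.
  by rewrite normrM normfV (gtr0_norm P0) ler_pdivrMr.
lra.
Qed.

End TaylorExpansion.

Section MomentBounds.
Variable R : realType.

Lemma quarter_le_P (p : R) : 0 < p -> p <= 1/2 -> 1/4 <= (1 - p ^+ 2) ^+ 4.
Proof.
move=> p_gt0 p_le; have r_ge : 3/4 <= 1 - p ^+ 2 by rewrite expr2; nra.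
apply: (le_trans (y := (3/4) ^+ 4)); first by rewrite !exprS expr0; lra.
by rewrite lerXn2r ?nnegrE //; lra.
Qed.

Lemma P_le_expR (p : R) : 0 < p -> p <= 1/2 -> (1 - p ^+ 2) ^+ 4 <= expR (- (4 * p ^+ 2)).
Proof.
move=> p_gt0 p_le; have r_ge : 3/4 <= 1 - p ^+ 2 by rewrite expr2; nra.
have -> : - (4 * p ^+ 2) = 4%:R * (- p ^+ 2) by ring.
have r_le : 1 - p ^+ 2 <= expR (- p ^+ 2) := expR_ge1Dx _.
by rewrite expRM_natl lerXn2r // nnegrE ?expR_ge0 //; lra.
Qed.

Definition moment_bounds (p : R) (L : seq (R * R)) (k : nat) : Prop :=
  let P := (1 - p ^+ 2) ^+ 4 in
  [/\ \sum_(w <- L) w.1 = 0, \sum_(w <- L) `|w.1| <= 16,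
      all (fun w => `|w.2 - P| <= 24 * p ^+ 3) L,
      `|\sum_(w <- L) w.1 * w.2| <= 40 * p ^+ k
    & `|\sum_(w <- L) w.1 * (w.2 - P) ^+ 2| <= 600 * p ^+ 6].

(* 160 and 9600 bound the first- and second-order terms, 16 * 96^3 * e^96 the remainder. *)
Definition expansion_const : R := 9760 + 16 * 96 ^+ 3 * expR 96.

Lemma expansion_const_gt0 : 0 < expansion_const.
Proof. by rewrite ltr_wpDr ?mulr_ge0 ?exprn_ge0 ?expR_ge0. Qed.

Lemma remainder_term_le (s t : R) : s <= 16 -> 0 <= t <= 1 ->
  s * ((96 * t) ^+ 3 * expR (96 * t)) <= 16 * 96 ^+ 3 * expR 96 * t ^+ 2.
Proof.
move=> s16 /andP[t0 t1].
have cube_le : (96 * t) ^+ 3 <= 96 ^+ 3 * t ^+ 2.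
  by rewrite exprMn ler_wpM2l ?exprn_ge0 // exprS ler_piMl ?exprn_ge0.
have exp_le : expR (96 * t) <= expR 96 by rewrite ler_expR; lra.
have rem_le : (96 * t) ^+ 3 * expR (96 * t) <= 96 ^+ 3 * t ^+ 2 * expR 96.
  by apply: ler_pM; rewrite ?exprn_ge0 ?expR_ge0 ?mulr_ge0.
have rem_ge0 : 0 <= (96 * t) ^+ 3 * expR (96 * t).
  by rewrite mulr_ge0 ?exprn_ge0 ?expR_ge0 ?mulr_ge0.
apply: (le_trans (y := 16 * ((96 * t) ^+ 3 * expR (96 * t)))); last lra.
exact: ler_wpM2r.
Qed.

Lemma expansion_terms_le (p P N1 N2 s : R) (k m : nat) :
  0 < p -> 1/4 <= P -> m%:R * p ^+ 3 <= 1 ->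
  N1 <= 40 * p ^+ k -> N2 <= 600 * p ^+ 6 -> s <= 16 ->
  m%:R * (N1 / P) + m%:R ^+ 2 * (N2 / P ^+ 2)
    + s * ((m%:R * (96 * p ^+ 3)) ^+ 3 * expR (m%:R * (96 * p ^+ 3)))
  <= expansion_const * (m%:R * p ^+ k + (m%:R * p ^+ 3) ^+ 2).
Proof.
move=> p_gt0 P14 t_le1 N1_le N2_le s16; have P_gt0 : 0 < P by lra.
have pk_ge0 : 0 <= p ^+ k by rewrite exprn_ge0 ?ltW.
have p6_ge0 : 0 <= p ^+ 6 by rewrite exprn_ge0 ?ltW.
have N1_term : m%:R * (N1 / P) <= 160 * (m%:R * p ^+ k).
  rewrite [160 * _]mulrCA ler_wpM2l // ler_pdivrMr //.
  have : 0 <= 160 * p ^+ k * (P - 1/4) by apply: mulr_ge0; lra.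
  lra.
set t := m%:R * p ^+ 3 in t_le1 *.
have t_ge0 : 0 <= t by rewrite mulr_ge0 ?ler0n ?exprn_ge0 ?ltW.
have N2_term : m%:R ^+ 2 * (N2 / P ^+ 2) <= 9600 * t ^+ 2.
  have -> : 9600 * t ^+ 2 = m%:R ^+ 2 * (9600 * p ^+ 6) by rewrite /t; ring.
  rewrite ler_wpM2l ?exprn_ge0 // ler_pdivrMr; last exact: exprn_gt0.
  have P2 : 1/16 <= P ^+ 2 by rewrite expr2; nra.
  have : 0 <= 9600 * p ^+ 6 * (P ^+ 2 - 1/16) by apply: mulr_ge0; lra.
  lra.
have rem_term : s * ((96 * t) ^+ 3 * expR (96 * t)) <= 16 * 96 ^+ 3 * expR 96 * t ^+ 2.
  by apply: remainder_term_le => //; apply/andP.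
have -> : m%:R * (96 * p ^+ 3) = 96 * t by rewrite /t; ring.
have K_ge0 : 0 <= 16 * 96 ^+ 3 * expR 96 :> R by rewrite !mulr_ge0 ?expR_ge0.
have mpk_ge0 : 0 <= m%:R * p ^+ k by rewrite mulr_ge0.
have t2_ge0 : 0 <= t ^+ 2 by rewrite exprn_ge0.
have Kmpk_ge0 : 0 <= 16 * 96 ^+ 3 * expR 96 * (m%:R * p ^+ k) by rewrite mulr_ge0.
rewrite /expansion_const; lra.
Qed.

Lemma moment_bounds_pow_le (p : R) (L : seq (R * R)) (k m : nat) :
  0 < p -> p <= 1/2 -> m%:R * p ^+ 3 <= 1 -> moment_bounds p L k ->
  \sum_(w <- L) w.1 * w.2 ^+ m <= expansion_const *
    (m%:R * p ^+ k * expR (- (4 * m%:R * p ^+ 2))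
     + (m%:R * p ^+ 3) ^+ 2 * expR (- (4 * m%:R * p ^+ 2))).
Proof.
move=> p_gt0 p_le t_le1 [sum0 abs_sum_le /allP Lbound N1_le N2_le].
have P14 := quarter_le_P p_gt0 p_le; have P_le := P_le_expR p_gt0 p_le.
set P := (1 - p ^+ 2) ^+ 4 in P14 P_le Lbound N2_le *.
have P_gt0 : 0 < P by lra.
have Lbound' w : w \in L -> `|w.2 - P| <= 96 * p ^+ 3 * P.
  move=> /Lbound qP; have p3_ge0 : 0 <= p ^+ 3 by rewrite exprn_ge0 ?ltW.
  have : 0 <= 96 * p ^+ 3 * (P - 1/4) by apply: mulr_ge0; lra.
  lra.
apply: (le_trans (zero_sum_pow_le _ P_gt0 sum0 Lbound')).
have terms_le := expansion_terms_le p_gt0 P14 t_le1 N1_le N2_le abs_sum_le.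
set E := expR (- (4 * m%:R * p ^+ 2)).
have P_pow_le : P ^+ m <= E.
  rewrite /E; have -> : - (4 * m%:R * p ^+ 2) = m%:R * (- (4 * p ^+ 2)) by ring.
  by rewrite expRM_natl; apply: lerXn2r; rewrite // nnegrE ?expR_ge0 ?ltW.
set B := expansion_const * _ in terms_le.
have B_ge0 : 0 <= B.
  apply: mulr_ge0; first exact: ltW expansion_const_gt0.
  by rewrite addr_ge0 ?exprn_ge0 ?mulr_ge0 ?ler0n ?exprn_ge0 ?ltW.
rewrite [X in _ <= X](_ : _ = E * B); last by rewrite /B; ring.
apply: (le_trans (y := P ^+ m * B)); last exact: ler_wpM2r.
by apply: ler_wpM2l; first exact: exprn_ge0 (ltW P_gt0).
Qed.

End MomentBounds.

(* Adds [0 <= p ^+ i] and [p ^+ i <= p ^+ i.-1] for [lo < i <= hi], the monomial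
   comparisons that lra needs. *)
Ltac pow_chain p0 p1 lo hi :=
  let rec go i := tryif constr_eq i lo then idtac else lazymatch i with
    | S ?k => have ? := ler_wiXn2l p0 p1 (leqnSn k); have ? := exprn_ge0 i p0; go k
    end in go hi.

Ltac solve_norm_le := rewrite ler_norml; apply/andP; split; lra.

Section ExpansionMoments.
Variables (R : realType) (p : R).

Lemma expansion_g1g1_moments : 0 < p -> p <= 1/2 -> moment_bounds p (expansion_g1g1 p) 5.
Proof.
move=> p_gt0 p_le; have p0 := ltW p_gt0; have p1 : p <= 1 by lra.
rewrite /moment_bounds /expansion_g1g1 /prodsum_weights /prodsum_int /prodsum_mul.
rewrite /gbar_prodsum /bern_mean /g1_factor /=.
split; rewrite ?big_cons ?big_nil /=.
- lra.
- rewrite !normrM ?normrN !normr1; lra.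
- pow_chain p0 p1 3%N 9%N.
  by repeat (apply/andP; split); try solve_norm_le.
- pow_chain p0 p1 5%N 12%N; solve_norm_le.
- pow_chain p0 p1 6%N 20%N; solve_norm_le.
Qed.

Lemma expansion_g2g2_moments : 0 < p -> p <= 1/2 -> moment_bounds p (expansion_g2g2 p) 4.
Proof.
move=> p_gt0 p_le; have p0 := ltW p_gt0; have p1 : p <= 1 by lra.
rewrite /moment_bounds /expansion_g2g2 /prodsum_weights /prodsum_int /prodsum_mul.
rewrite /gbar_prodsum /bern_mean /g_factor /=.
split; rewrite ?big_cons ?big_nil /=.
- lra.
- rewrite !normrM ?normrN !normr1; lra.
- pow_chain p0 p1 3%N 12%N.
  by repeat (apply/andP; split); try solve_norm_le.
- pow_chain p0 p1 4%N 12%N; solve_norm_le.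
- pow_chain p0 p1 6%N 24%N; solve_norm_le.
Qed.

Lemma expansion_g2g1_moments : 0 < p -> p <= 1/2 -> moment_bounds p (expansion_g2g1 p) 5.
Proof.
move=> p_gt0 p_le; have p0 := ltW p_gt0; have p1 : p <= 1 by lra.
rewrite /moment_bounds /expansion_g2g1 /prodsum_weights /prodsum_int /prodsum_mul.
rewrite /gbar_prodsum /bern_mean /g_factor /g1_factor /=.
split; rewrite ?big_cons ?big_nil /=.
- lra.
- rewrite !normrM ?normrN !normr1; lra.
- pow_chain p0 p1 3%N 11%N.
  by repeat (apply/andP; split); try solve_norm_le.
- pow_chain p0 p1 5%N 11%N; solve_norm_le.
- pow_chain p0 p1 6%N 22%N; solve_norm_le.
Qed.

End ExpansionMoments.

Lemma le_half_of_cube_le (R : realType) (m : nat) (p : R) :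
  (8 < m)%N -> 0 < p -> m%:R * p ^+ 3 <= 1 -> p <= 1/2.
Proof.
move=> m_gt8 p_gt0 t_le1; have m9 : (9 : R) <= m%:R by rewrite ler_nat.
rewrite leNgt; apply/negP => p_gt.
have p3_gt : 1/8 < p ^+ 3 by rewrite !exprS expr0 mulr1; nra.
nra.
Qed.

Theorem lemma6p1 (R : realType) :
  exists (m0 : nat) (C : R), 0 < C /\
  forall (n m : nat) (p : R), (m0 < m)%N -> 0 < p -> p < 1 ->
    m%:R * p ^+ 3 <= 1 ->
    let E := expR (- (4 * m%:R * p ^+ 2)) in
    [/\ norm2sq m p (contr_dim 1 1 0 1) (contr m p 1 1 0 1 (gbar1 m p) (gbar1 m p))
          <= C * (m%:R * p ^+ 5 * E + (m%:R * p ^+ 3) ^+ 2 * E),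
        norm2sq m p (contr_dim 2 2 1 1) (contr m p 2 2 1 1 (gbar2 m p) (gbar2 m p))
          <= C * (m%:R * p ^+ 4 * E + (m%:R * p ^+ 3) ^+ 2 * E)
      & norm2sq m p (contr_dim 2 1 1 1) (contr m p 2 1 1 1 (gbar2 m p) (gbar1 m p))
          <= C * (m%:R * p ^+ 5 * E + (m%:R * p ^+ 3) ^+ 2 * E)].
Proof.
exists 8%N, (expansion_const R); split; first exact: (expansion_const_gt0 R).
move=> _ m p m_gt8 p_gt0 _ t_le1 E.
have p_le := le_half_of_cube_le m_gt8 p_gt0 t_le1.
rewrite norm_contr_g1g1E norm_contr_g2g2E norm_contr_g2g1E.
split; apply: moment_bounds_pow_le => //.
- exact: expansion_g1g1_moments.
- exact: expansion_g2g2_moments.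
- exact: expansion_g2g1_moments.
Qed.
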